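(* Let $n\ge1$, let $G^\star=([n],E^\star)$ be a directed graph (directed cycles allowed), let $t\ge1$ and let $(a_0,a_1,\dots,a_{t+1})\in[n]^{t+2}$ be such that $a_i$ and $a_{i+1}$ are $p$-adjacent in $G^\star$ for all $i\in\{0,\dots,t\}$, and $a_i$ and $a_j$ are not $p$-adjacent in $G^\star$ for all $i\in\{2,\dots,t+1\}$ and $j\in\{0,\dots,i-2\}$. Then at least one of the following holds: (1) each of $a_1,\dots,a_t$ is an ancestor of $a_0$ or of $a_{t+1}$ in $G^\star$; or (2) there exist $j,\ell\in\{1,\dots,t\}$ with $j\le\ell$ such that $(a_{j-1},a_j,a_{j+1})$ and $(a_{\ell-1},a_\ell,a_{\ell+1})$ are mutually exclusive with respect to the uncovered itinerary $(a_{j-1},a_j,\dots,a_{\ell+1})$ in $G^\star$.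
   Context: In a directed graph $G$, $a$ is an ancestor of $b$ if $a=b$ or there is a directed path from $a$ to $b$. Distinct vertices $a,b$ are $p$-adjacent in $G$ if there is an edge between them (in either direction), or $a$ and $b$ have a common child in $G$ that is an ancestor of $a$ or of $b$. For $s\ge1$ and vertices $b_0,b_1,\dots,b_{s+1}$, the triples $(b_0,b_1,b_2)$ and $(b_{s-1},b_s,b_{s+1})$ are mutually exclusive with respect to the uncovered itinerary $(b_0,\dots,b_{s+1})$ in $G$ if: $b_i$ and $b_{i-1}$ are $p$-adjacent for all $i\in\{1,\dots,s+1\}$; $b_i$ and $b_j$ are not $p$-adjacent for all $i\in\{2,\dots,s+1\}$, $j\in\{0,\dots,i-2\}$; $b_i$ is an ancestor of $b_{i+1}$ for all $i\in\{1,\dots,s-1\}$; $b_i$ is an ancestor of $b_{i-1}$ for all $i\in\{2,\dots,s\}$; and $b_1$ is an ancestor of neither $b_0$ nor $b_{s+1}$. *)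

From mathcomp Require Import all_boot.
Set Implicit Arguments. Unset Strict Implicit. Unset Printing Implicit Defensive.

(* A directed graph on vertex set [n] = 'I_n is an edge relation E : rel 'I_n
   (E x y means there is an edge x -> y). *)

Definition ancestor (n : nat) (E : rel 'I_n) (a b : 'I_n) : bool := connect E a b.

Definition padj (n : nat) (E : rel 'I_n) (a b : 'I_n) : bool :=
  (a != b) &&
  [|| E a b, E b a |
      [exists c : 'I_n, [&& E a c, E b c & ancestor E c a || ancestor E c b]]].

(* The triples (b0,b1,b2) and (b_{s-1},b_s,b_{s+1}) are mutually exclusive
   with respect to the uncovered itinerary (b 0, ..., b (s+1)); s >= 1. *)
Definition mut_excl (n : nat) (E : rel 'I_n) (b : nat -> 'I_n) (s : nat) : Prop :=
  1 <= s /\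
  [/\ (forall i, 1 <= i <= s.+1 -> padj E (b i) (b i.-1)),
      (forall i j, 2 <= i <= s.+1 -> j <= i - 2 -> ~~ padj E (b i) (b j)),
      (forall i, 1 <= i <= s - 1 -> ancestor E (b i) (b i.+1)),
      (forall i, 2 <= i <= s -> ancestor E (b i) (b i.-1)) &
      (~~ ancestor E (b 1) (b 0) /\ ~~ ancestor E (b 1) (b s.+1))].

From mathcomp Require Import all_boot zify.
Set Implicit Arguments. Unset Strict Implicit. Unset Printing Implicit Defensive.

(* Suppose some a_k with 1 <= k <= t is an ancestor of neither a_0 nor a_(t+1).
   Among such vertices choose one, a_m, with an smallest set of
   descendants: every a_i that a_m reaches is then again such a vertex, so it
   lies strictly inside the itinerary and reaches a_m back.  Let a_j..a_l be the
   maximal block of consecutive vertices around a_m in the strong component of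
   a_m.  Its vertices are pairwise ancestors of each other, and a_j reaches
   neither a_(j-1) nor a_(l+1), since a_m would reach them and they would
   extend the block.  Hence (a_(j-1), ..., a_(l+1)) is the required uncovered
   itinerary. *)

Lemma connect_minimal (T : finType) (e : rel T) (P : pred T) x : P x ->
  exists2 y, P y & forall z, P z -> connect e y z -> connect e z y.
Proof.
move=> Px; case: (arg_minnP (fun y => #|[set z | connect e y z]|) Px).
move=> y Py ymin; exists y => // z Pz yz.
have sub : [set v | connect e z v] \subset [set v | connect e y v].
  by apply/subsetP => v; rewrite !inE; apply: connect_trans.
have/subset_cardP/(_ sub) eq_desc : #|[set v | connect e z v]| = #|[set v | connect e y v]|.
  by apply/eqP; rewrite eqn_leq subset_leq_card ?ymin.
by move: (eq_desc y); rewrite !inE connect0.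
Qed.

Lemma maximal_run (C : pred nat) lo hi k : lo <= k <= hi -> C k ->
  exists j l, [/\ lo <= j <= k, k <= l <= hi, (forall i, j <= i <= l -> C i),
                  lo < j -> ~~ C j.-1 & l < hi -> ~~ C l.+1].
Proof.
move=> /andP[lok khi] Ck.
pose Pj j := (lo <= j <= k) && all C (index_iota j k.+1).
pose Pl l := (k <= l <= hi) && all C (index_iota k l.+1).
have exj : exists j, Pj j by exists k; rewrite /Pj lok leqnn /index_iota subSnn /= Ck.
have exl : exists l, Pl l by exists k; rewrite /Pl khi leqnn /index_iota subSnn /= Ck.
have ubl : forall l, Pl l -> l <= hi by move=> l /andP[/andP[]].
case: (ex_minnP exj) => j /andP[/andP[loj jk] /allP Cj] jmin.
case: (ex_maxnP exl ubl) => l /andP[/andP[kl lhi] /allP Cl] lmax.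
exists j, l; split; rewrite ?loj ?jk ?kl ?lhi //.
- move=> i /andP[ji il]; have [ik|ki] := leqP i k.
    by apply: Cj; rewrite mem_index_iota ji ltnS.
  by apply: Cl; rewrite mem_index_iota ltnW.
- move=> loj'; apply/negP => Cj1; have := jmin j.-1; rewrite /Pj.
  suff -> : (lo <= j.-1 <= k) && all C (index_iota j.-1 k.+1) by lia.
  apply/andP; split; first lia.
  apply/allP => i; rewrite mem_index_iota => /andP[ji ik].
  have [->|ij] := eqVneq i j.-1; first by [].
  by apply: Cj; rewrite mem_index_iota; lia.
- move=> lhi'; apply/negP => Cl1; have := lmax l.+1; rewrite /Pl.
  suff -> : (k <= l.+1 <= hi) && all C (index_iota k l.+2) by lia.
  apply/andP; split; first lia.
  apply/allP => i; rewrite mem_index_iota => /andP[ki il].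
  have [->|il'] := eqVneq i l.+1; first by [].
  by apply: Cl; rewrite mem_index_iota; lia.
Qed.

Lemma padj_sym n (E : rel 'I_n) x y : padj E x y -> padj E y x.
Proof.
rewrite /padj eq_sym => /andP[-> /or3P[->|->|/existsP[c /and3P[xc yc cxy]]]];
  rewrite ?orbT //.
by apply/or3P/Or33/existsP; exists c; rewrite xc yc orbC.
Qed.

Section UncoveredItinerary.
Variables (n : nat) (E : rel 'I_n) (t : nat) (a : nat -> 'I_n).

Definition covered v := ancestor E v (a 0) || ancestor E v (a t.+1).

Lemma covered_anc u v : ancestor E u v -> covered v -> covered u.
Proof.
by move=> uv /orP[] vw; apply/orP; [left | right]; apply: connect_trans uv vw.
Qed.

Lemma exists_terminal_index k : 1 <= k <= t -> ~~ covered (a k) ->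
  exists2 m, 1 <= m <= t &
    forall i, i <= t.+1 -> ancestor E (a m) (a i) ->
      1 <= i <= t /\ ancestor E (a i) (a m).
Proof.
move=> kt unc_k.
pose P := [pred v | (v \in [seq a i | i <- index_iota 1 t.+1]) && ~~ covered v].
have Pak : P (a k) by rewrite inE unc_k andbT; apply: map_f; rewrite mem_index_iota.
case: (connect_minimal E Pak) => _ /andP[/mapP[m + ->] unc_m] m_min.
rewrite mem_index_iota => mt; exists m => // i it mi.
have unc_i : ~~ covered (a i) by apply: contra unc_m; apply: covered_anc.
have i_in : 1 <= i <= t.
  case: i it unc_i {mi} => [|i] it unc_i.
    by rewrite /covered /ancestor connect0 in unc_i.
  rewrite /= ltn_neqAle -ltnS it andbT; apply: contraNneq unc_i => ->.
  by rewrite /covered /ancestor connect0 orbT.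
split => //; apply: m_min mi; rewrite inE unc_i andbT.
by apply: map_f; rewrite mem_index_iota.
Qed.

Hypothesis a_padj : forall i, i <= t -> padj E (a i) (a i.+1).
Hypothesis a_not_padj :
  forall i j, 2 <= i <= t.+1 -> j <= i - 2 -> ~~ padj E (a i) (a j).

Lemma mut_excl_run j l : 1 <= j <= l -> l <= t ->
  (forall x y, j <= x <= l -> j <= y <= l -> ancestor E (a x) (a y)) ->
  ~~ ancestor E (a j) (a j.-1) -> ~~ ancestor E (a j) (a l.+1) ->
  mut_excl E (fun i => a (j.-1 + i)) (l - j).+1.
Proof.
move=> jl lt run_anc not_back not_fwd.
have shift1 : j.-1 + 1 = j by lia.
split=> //; split.
- move=> i ir /=; have -> : j.-1 + i = (j.-1 + i.-1).+1 by lia.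
  by apply/padj_sym/a_padj; lia.
- by move=> i i' ir i'r /=; apply: a_not_padj; lia.
- by move=> i ir /=; apply: run_anc; lia.
- by move=> i ir /=; apply: run_anc; lia.
- have -> : j.-1 + (l - j).+2 = l.+1 by lia.
  by rewrite shift1 addn0.
Qed.

Lemma mut_excl_around m : 1 <= m <= t ->
  (forall i, i <= t.+1 -> ancestor E (a m) (a i) ->
     1 <= i <= t /\ ancestor E (a i) (a m)) ->
  exists j l, [/\ 1 <= j, j <= l, l <= t &
    mut_excl E (fun i => a (j.-1 + i)) (l - j).+1].
Proof.
move=> mt m_terminal.
pose C i := ancestor E (a m) (a i) && ancestor E (a i) (a m).
have Cm : C m by rewrite /C /ancestor connect0.
have [j [l [/andP[jpos jm] /andP[ml lt] Crun jmax lmax]]] := maximal_run mt Cm.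
have runC x : j <= x <= l -> ancestor E (a m) (a x) /\ ancestor E (a x) (a m).
  by move=> /Crun/andP.
have exit_run x y : j <= x <= l -> y <= t.+1 -> ancestor E (a x) (a y) ->
    1 <= y <= t /\ C y.
  move=> xr yt xy; have [mx _] := runC x xr.
  have [yr ym] := m_terminal y yt (connect_trans mx xy).
  by split=> //; apply/andP; split=> //; apply: connect_trans mx xy.
exists j, l; split => //; first lia.
apply: mut_excl_run => //; first lia.
- move=> x y xr yr; have [_ xm] := runC x xr; have [my _] := runC y yr.
  exact: connect_trans xm my.
- apply/negP=> back; have [j1 Cj1] := exit_run j j.-1 ltac:(lia) ltac:(lia) back.
  by move: (jmax ltac:(lia)); rewrite Cj1.
- apply/negP=> fwd; have [l1 Cl1] := exit_run j l.+1 ltac:(lia) ltac:(lia) fwd.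
  by move: (lmax ltac:(lia)); rewrite Cl1.
Qed.

End UncoveredItinerary.

Theorem lemma3p12 (n : nat) (E : rel 'I_n) (t : nat) (a : nat -> 'I_n) :
  1 <= n -> 1 <= t ->
  (forall i, i <= t -> padj E (a i) (a i.+1)) ->
  (forall i j, 2 <= i <= t.+1 -> j <= i - 2 -> ~~ padj E (a i) (a j)) ->
  (forall i, 1 <= i <= t -> ancestor E (a i) (a 0) || ancestor E (a i) (a t.+1))
  \/ (exists j l, [/\ 1 <= j, j <= l, l <= t &
        mut_excl E (fun i => a (j.-1 + i)) (l - j).+1]).
Proof.
move=> _ _ a_padj a_not_padj.
have [cov|/allPn[k]] := boolP (all (fun i => covered E t a (a i)) (index_iota 1 t.+1)).
  by left=> i it; apply: (allP cov); rewrite mem_index_iota.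
rewrite mem_index_iota => kt unc_k; right.
have [m mt m_terminal] := exists_terminal_index kt unc_k.
exact: mut_excl_around a_padj a_not_padj m mt m_terminal.
Qed.
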